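(* Let $|\cdot|$ be a norm on $\mathbb{R}^d$ and let $\mathbf{X}=\{\mathbf{X}_j,j\in\mathbb{Z}\}$ be a strictly stationary, regularly varying $\mathbb{R}^d$-valued time series with tail process $\mathbf{Y}$. Let $u_n>0$ and positive integers $r_n$ satisfy $u_n\to\infty$, $r_n\to\infty$, $nw_n\to\infty$, $r_n/n\to0$, $r_nw_n\to0$, where $w_n=\mathbb{P}(|\mathbf{X}_0|>u_n)$. Let $\gamma\ge0$ and assume $\mathcal{S}^{(\gamma)}(r_n,u_n)$ holds. Let $H\in\mathcal{H}(\gamma)$. Then $$\lim_{L\to\infty}\limsup_{n\to\infty}\frac{\mathbb{E}\big[|H|(u_n^{-1}\mathbf{X}_{1,r_n})\mathbf{1}\{|H|(u_n^{-1}\mathbf{X}_{1,r_n})>L\}\big]}{r_nw_n}=0.$$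
   Context: Tail process: for all $i\le j$ the law of $x^{-1}(\mathbf{X}_i,\dots,\mathbf{X}_j)$ given $|\mathbf{X}_0|>x$ converges weakly to that of $(\mathbf{Y}_i,\dots,\mathbf{Y}_j)$ as $x\to\infty$. Notation: $\mathbf{x}_{i,j}=(\mathbf{x}_i,\dots,\mathbf{x}_j)$; the finite vector $u_n^{-1}\mathbf{X}_{1,r_n}$ is identified with the sequence having these entries at coordinates $1,\dots,r_n$ and $\mathbf{0}$ elsewhere; $\ell_0(\mathbb{R}^d)$ is the set of sequences tending to $0$ at $\pm\infty$. $\mathcal{S}^{(\gamma)}(r_n,u_n)$: for all $s,t>0$, $\lim_{\ell\to\infty}\limsup_{n\to\infty}\frac{1}{w_n}\sum_{i=\ell}^{r_n}i^\gamma\,\mathbb{P}(|\mathbf{X}_0|>u_ns,|\mathbf{X}_i|>u_nt)=0$. For $\mathbf{x}\in\ell_0(\mathbb{R}^d)$: $T_{\min}(\mathbf{x})=\inf\{j:|\mathbf{x}_j|>1\}$, $T_{\max}(\mathbf{x})=\sup\{j:|\mathbf{x}_j|>1\}$, $\mathrm{exc}(\mathbf{x})=\sum_j\mathbf{1}\{|\mathbf{x}_j|>1\}$, cluster length $\mathcal{K}(\mathbf{x})=T_{\max}(\mathbf{x})-T_{\min}(\mathbf{x})+1$ (and $0$ if $\mathrm{exc}(\mathbf{x})=0$). $\mathcal{H}(\gamma)$ is the class of functionals $H:\ell_0(\mathbb{R}^d)\to\mathbb{R}_+$ such that: (i) $H$ is continuous at almost every realization of $\mathbf{Y}$; (ii)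 $H(\mathbf{x})=0$ if $\mathrm{exc}(\mathbf{x})=0$; (iii) if $\mathrm{exc}(\mathbf{x})>0$ then $H(\mathbf{x})=H(\mathbf{x}_{T_{\min}(\mathbf{x}),T_{\max}(\mathbf{x})})$; (iv) there is $C_H>0$ with $H(\mathbf{x})\le C_H[\mathcal{K}(\mathbf{x})]^\gamma$ for all $\mathbf{x}$. *)

From HB Require Import structures.
From mathcomp Require Import all_boot all_order all_algebra.
From mathcomp Require Import all_classical all_reals all_analysis.
Set Implicit Arguments. Unset Strict Implicit. Unset Printing Implicit Defensive.
Import Order.TTheory GRing.Theory Num.Theory.
Import numFieldNormedType.Exports.
Local Open Scope classical_set_scope.
Local Open Scope ring_scope.

Section Defs.
Variables (R : realType) (d : nat).

Definition is_norm (N : 'rV[R]_d -> R) : Prop :=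
  [/\ forall x, N x = 0 -> x = 0,
      forall (a : R) x, N (a *: x) = `|a| * N x
    & forall x y, N (x + y) <= N x + N y].

Definition ell0 (N : 'rV[R]_d -> R) (x : int -> 'rV[R]_d) : Prop :=
  (fun n : nat => N (x n%:Z)) @ \oo --> (0 : R) /\
  (fun n : nat => N (x (- n%:Z))) @ \oo --> (0 : R).

Definition has_exc (N : 'rV[R]_d -> R) (x : int -> 'rV[R]_d) : Prop :=
  exists j, 1 < N (x j).

Definition Tmin (N : 'rV[R]_d -> R) (x : int -> 'rV[R]_d) : int :=
  xget 0 [set j | 1 < N (x j) /\ forall m, m < j -> N (x m) <= 1].

Definition Tmax (N : 'rV[R]_d -> R) (x : int -> 'rV[R]_d) : int :=
  xget 0 [set j | 1 < N (x j) /\ forall m, j < m -> N (x m) <= 1].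

Definition clen (N : 'rV[R]_d -> R) (x : int -> 'rV[R]_d) : nat :=
  if `[< has_exc N x >] then (`|Tmax N x - Tmin N x|%N).+1 else 0%N.

(* x_{i,j} identified with the sequence equal to x on [i,j] and 0 elsewhere *)
Definition window (x : int -> 'rV[R]_d) (i j : int) : int -> 'rV[R]_d :=
  fun m => if (i <= m) && (m <= j) then x m else 0.

(* continuity of H at x for the sup-norm (l^infty) topology on l_0 *)
Definition cont_at (N : 'rV[R]_d -> R) (H : (int -> 'rV[R]_d) -> R)
    (x : int -> 'rV[R]_d) : Prop :=
  forall e : R, 0 < e -> exists2 delta : R, 0 < delta &
    forall z, ell0 N z -> (forall j, N (z j - x j) <= delta) ->
      `|H z - H x| < e.

Definition block (x : int -> 'rV[R]_d) (i : int) (k : nat) : 'M[R]_(k.+1, d) :=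
  \matrix_(l < k.+1, c < d) x (i + (l : nat)%:Z) 0 c.

End Defs.

Section Prob.
Variables (R : realType) (d : nat) (N : 'rV[R]_d -> R).

Definition coord_measurable (dT : measure_display) (T : measurableType dT)
    (X : int -> T -> 'rV[R]_d) : Prop :=
  forall j (c : 'I_d), measurable_fun setT (fun w => X j w 0 c).

(* strict stationarity: all finite blocks have shift-invariant laws
   (laws on R^{(k+1) x d} compared through bounded continuous functions) *)
Definition stationary (dT : measure_display) (T : measurableType dT)
    (P : probability T R) (X : int -> T -> 'rV[R]_d) : Prop :=
  forall (i h : int) (k : nat) (f : 'M[R]_(k.+1, d) -> R),
    continuous f -> (exists M : R, forall z, `|f z| <= M) ->
    (\int[P]_w (f (block (X ^~ w) i k))%:E =
     \int[P]_w (f (block (X ^~ w) (i + h) k))%:E)%E.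

(* Y is the tail process of X: for every i <= j (here j = i + k) the law of
   x^{-1} (X_i,...,X_j) given |X_0| > x converges weakly to the law of
   (Y_i,...,Y_j) as x -> oo *)
Definition tail_process (dT : measure_display) (T : measurableType dT)
    (P : probability T R) (X : int -> T -> 'rV[R]_d)
    (dT' : measure_display) (T' : measurableType dT')
    (P' : probability T' R) (Y : int -> T' -> 'rV[R]_d) : Prop :=
  forall (i : int) (k : nat) (f : 'M[R]_(k.+1, d) -> R),
    continuous f -> (exists M : R, forall z, `|f z| <= M) ->
    (fun x : R =>
       ((\int[P]_(w in [set w | (x < N (X 0 w))%R]) (f (x^-1 *: block (X ^~ w) i k))%:E)
        * ((fine (P [set w | (x < N (X 0 w))%R]))^-1)%:E)%E)
      @ +oo --> (\int[P']_w (f (block (Y ^~ w) i k))%:E)%E.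

(* regularly varying stationary time series with tail process Y
   (Basrak--Segers characterization: |Y_0| is Pareto(alpha)) *)
Definition regvar_tail (dT : measure_display) (T : measurableType dT)
    (P : probability T R) (X : int -> T -> 'rV[R]_d)
    (dT' : measure_display) (T' : measurableType dT')
    (P' : probability T' R) (Y : int -> T' -> 'rV[R]_d) : Prop :=
  exists2 alpha : R, 0 < alpha &
    (forall y : R, 1 <= y -> P' [set w | y < N (Y 0 w)] = (y `^ (- alpha))%:E) /\
    tail_process P X P' Y.

Definition cond_S (dT : measure_display) (T : measurableType dT)
    (P : probability T R) (X : int -> T -> 'rV[R]_d)
    (gamma : R) (r : nat -> nat) (u : nat -> R) : Prop :=
  let w n := fine (P [set w | u n < N (X 0 w)]) in
  forall s t : R, 0 < s -> 0 < t ->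
    (fun l : nat => limn_esup (fun n : nat =>
       ((w n)^-1)%:E *
       \sum_(l <= i < (r n).+1)
          ((i%:R `^ gamma)%:E *
           P [set w | (u n * s < N (X 0 w))%R /\ (u n * t < N (X i%:Z w))%R])))%E
    @ \oo --> 0%E.

Definition Hclass (dT' : measure_display) (T' : measurableType dT')
    (P' : probability T' R) (Y : int -> T' -> 'rV[R]_d) (gamma : R)
    (H : (int -> 'rV[R]_d) -> R) : Prop :=
  [/\ (forall x, ell0 N x -> 0 <= H x),
      P'.-negligible [set w | ~ cont_at N H (Y ^~ w)],
      (forall x, ell0 N x -> ~ has_exc N x -> H x = 0),
      (forall x, ell0 N x -> has_exc N x ->
          H x = H (window x (Tmin N x) (Tmax N x)))
    & exists2 C : R, 0 < C &
        forall x, ell0 N x -> H x <= C * (clen N x)%:R `^ gamma].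

(* u_n^{-1} X_{1,r_n} as an element of l_0 *)
Definition scaled_block (x : int -> 'rV[R]_d) (un : R) (rn : nat) : int -> 'rV[R]_d :=
  fun m => if (1 <= m) && (m <= rn%:Z) then un^-1 *: x m else 0.

End Prob.

(* If |H|(u^-1 X_{1,r}) > L >= C l^gamma, the growth bound (iv) forces a
   cluster longer than l: its first and last exceedances 1 <= a < b <= r satisfy
   b - a >= l and |H| <= C (b - a + 1)^gamma.  Bounding the indicators of
   {|X_a| > u} and {|X_b| > u} by continuous ramps vanishing below u/2, summing
   over all such pairs and using stationarity (which is only available for
   bounded continuous functionals of finite blocks) gives
     E[|H| 1{|H| > L}] <= C 2^gamma r sum_{k=l}^{r} k^gamma P(|X_0| > u/2, |X_k| > u/2).
   Divided by r w_n, this is C 2^gamma times the quantity controlled by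
   S^(gamma)(r_n, u_n) with s = t = 1/2, whose limsup vanishes as l -> oo. *)

From HB Require Import structures.
From mathcomp Require Import all_boot all_order all_algebra.
From mathcomp Require Import all_classical all_reals all_analysis.
From mathcomp Require Import measurable_realfun ring lra zify.
Import Order.TTheory GRing.Theory Num.Theory.
Import numFieldNormedType.Exports.
Local Open Scope classical_set_scope.
Local Open Scope ring_scope.
Set Implicit Arguments. Unset Strict Implicit.

Section NormTheory.
Variables (R : realType) (d : nat) (N : 'rV[R]_d -> R).
Hypothesis hN : is_norm N.

Lemma normN0 : N 0 = 0.
Proof. by case: hN => _ hZ _; rewrite -(scale0r (0 : 'rV_d)) hZ normr0 mul0r. Qed.

Lemma normNN x : N (- x) = N x.
Proof. by case: hN => _ hZ _; rewrite -scaleN1r hZ normrN normr1 mul1r. Qed.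

Lemma normN_ge0 x : 0 <= N x.
Proof.
case: hN => _ _ hT; have := hT x (- x).
rewrite subrr normN0 normNN; lra.
Qed.

Lemma normN_dist x y : `|N x - N y| <= N (x - y).
Proof.
case: hN => _ _ hT; apply/ler_normlP; split.
- by have := hT (y - x) x; rewrite subrK -opprB normNN; lra.
- by have := hT (x - y) y; rewrite subrK; lra.
Qed.

Lemma normN_le_coord x : N x <= \sum_(c < d) `|x 0 c| * N (delta_mx 0 c).
Proof.
case: hN => _ hZ hT; rewrite {1}(row_sum_delta x).
elim/big_ind2: _ => [|a b a' b' ha hb|c _]; first by rewrite normN0.
- exact: le_trans (hT _ _) (lerD ha hb).
- by rewrite hZ.
Qed.

Definition basis_norm := \sum_(c < d) N (delta_mx 0 c).

Lemma basis_norm_ge0 : 0 <= basis_norm.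
Proof. by apply: sumr_ge0 => c _; exact: normN_ge0. Qed.

Lemma normN_row_lipschitz m (l : 'I_m) (z z' : 'M[R]_(m, d)) :
  `|N (row l z) - N (row l z')| <= basis_norm * `|z - z'|.
Proof.
apply: le_trans (normN_dist _ _) _; apply: le_trans (normN_le_coord _) _.
rewrite /basis_norm mulr_suml; apply: ler_sum => c _.
rewrite mulrC ler_wpM2l ?normN_ge0 // !mxE.
have -> : z l c - z' l c = (z - z') l c by rewrite !mxE.
rewrite [leRHS]/Num.norm /= mx_normrE; apply/bigmax_geP; right.
by exists (l, c).
Qed.

End NormTheory.

(* Only the coordinates of [x] are assumed measurable, so [N (x w)] is reached
   as the limit of running minima of the measurable majorants [majorant q]
   over an enumeration of the rational points [q]. *)
Section MeasurableNorm.
Variables (R : realType) (d : nat) (N : 'rV[R]_d -> R).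
Hypothesis hN : is_norm N.
Variables (dT : measure_display) (T : measurableType dT) (x : T -> 'rV[R]_d).
Hypothesis mx : forall c, measurable_fun setT (fun w => x w 0 c).

Definition coord_dist (q : 'rV[R]_d) (w : T) : R :=
  \sum_(c < d) `|x w 0 c - q 0 c| * N (delta_mx 0 c).

Definition majorant (q : 'rV[R]_d) (w : T) : R := N q + coord_dist q w.

Lemma measurable_majorant q : measurable_fun setT (majorant q).
Proof.
apply: measurable_funD; first exact: measurable_cst.
apply: measurable_sum => c; apply: measurable_funM; last exact: measurable_cst.
apply: measurableT_comp; first exact: normr_measurable.
by apply: measurable_funB => //; exact: measurable_cst.
Qed.

Lemma majorant_ge q w : N (x w) <= majorant q w.
Proof.
have coordE : \sum_(c < d) `|(x w - q) 0 c| * N (delta_mx 0 c) = coord_dist q w.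
  by apply: eq_bigr => c _; rewrite !mxE.
case: hN => _ _ hT; have := hT q (x w - q); have := normN_le_coord hN (x w - q).
by rewrite coordE [q + _]addrC subrK /majorant; lra.
Qed.

Lemma majorant_le q w : majorant q w <= N (x w) + 2 * coord_dist q w.
Proof.
have coordE : \sum_(c < d) `|(q - x w) 0 c| * N (delta_mx 0 c) = coord_dist q w.
  by apply: eq_bigr => c _; rewrite !mxE distrC.
case: hN => _ _ hT; have := hT (x w) (q - x w); have := normN_le_coord hN (q - x w).
by rewrite coordE [x w + _]addrC subrK /majorant; lra.
Qed.

Lemma coord_dist_rat w (e : R) : 0 < e ->
  exists q : 'rV[rat]_d, coord_dist (map_mx ratr q) w <= e.
Proof.
move=> e0; pose S := basis_norm N + 1.
have S0 : 0 < S by rewrite ltr_wpDl ?basis_norm_ge0.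
have eS : 0 < e / S by rewrite divr_gt0.
have /choice [q hq] : forall c : 'I_d, exists q : rat,
    ratr q \in `](x w 0 c - e / S), (x w 0 c + e / S)[.
  by move=> c; apply: rat_in_itvoo; rewrite ltrBlDr -addrA ltrDl addr_gt0.
exists (\row_c q c); apply: (@le_trans _ _ (e / S * basis_norm N)).
  rewrite /basis_norm mulr_sumr; apply: ler_sum => c _.
  rewrite ler_wpM2r ?normN_ge0 // !mxE.
  by move: (hq c); rewrite in_itv /= => /andP [h1 h2]; apply/ler_normlP; split; lra.
rewrite mulrAC ler_pdivrMr // ler_wpM2l ?(ltW e0) // /S; lra.
Qed.

Definition rat_point (n : nat) : 'rV[R]_d :=
  map_mx ratr (odflt 0 (unpickle n : option 'rV[rat]_d)).

Fixpoint majorant_min (n : nat) (w : T) : R :=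
  if n is k.+1 then Num.min (majorant_min k w) (majorant (rat_point n) w)
  else majorant (rat_point 0) w.

Lemma measurable_majorant_min n : measurable_fun setT (majorant_min n).
Proof.
elim: n => [|n ih] /=; first exact: measurable_majorant.
exact: measurable_minr ih (measurable_majorant _).
Qed.

Lemma majorant_min_ge n w : N (x w) <= majorant_min n w.
Proof. by elim: n => [|n ih] /=; rewrite ?le_min ?ih majorant_ge. Qed.

Lemma majorant_min_le n k w :
  (k <= n)%N -> majorant_min n w <= majorant (rat_point k) w.
Proof.
elim: n => [|n ih] /=; first by rewrite leqn0 => /eqP ->.
rewrite leq_eqVlt ltnS => /orP [/eqP ->|/ih h]; rewrite ge_min ?lexx ?orbT //.
by rewrite h.
Qed.

Lemma majorant_min_cvg w : majorant_min ^~ w @ \oo --> N (x w).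
Proof.
apply/cvgrPdist_le => e e0.
have [q hq] := coord_dist_rat w (divr_gt0 e0 (ltr0n _ 2)).
exists (pickle q) => // n /= hn.
have := majorant_min_le w hn; rewrite /rat_point pickleK /= => h.
have := majorant_le (map_mx ratr q) w; have := majorant_min_ge n w.
by rewrite ler_norml; move=> *; apply/andP; split; lra.
Qed.

Lemma measurable_normN : measurable_fun setT (fun w => N (x w)).
Proof.
apply: (measurable_fun_cvg (h := majorant_min)) => [n|w _].
- exact: measurable_majorant_min.
- exact: majorant_min_cvg.
Qed.

End MeasurableNorm.

Section ClusterEnds.
Variables (R : realType) (d : nat) (N : 'rV[R]_d -> R) (x : int -> 'rV[R]_d) (r : nat).
Hypothesis exc_range : forall j, 1 < N (x j) -> 0 <= j <= r%:Z.

Let exc_nat j : 1 < N (x j) -> j = `|j|%N%:Z.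
Proof. by move=> /exc_range /andP [j0 _]; rewrite gez0_abs. Qed.

Let exc_natP : has_exc N x -> exists n : nat, `[< 1 < N (x n%:Z) >].
Proof. by move=> [j hj]; exists `|j|%N; rewrite -exc_nat //; exact/asboolP. Qed.

Lemma TminP : has_exc N x ->
  1 < N (x (Tmin N x)) /\ forall m, m < Tmin N x -> N (x m) <= 1.
Proof.
move=> /exc_natP hex.
apply: (xgetPex 0 (P := [set j | 1 < N (x j) /\ forall m, m < j -> N (x m) <= 1])).
case: (ex_minnP hex) => a /asboolP ha amin; exists a%:Z; split => // m hm.
rewrite leNgt; apply/negP => hm1; have em := exc_nat hm1.
have : (a <= `|m|)%N by apply: amin; rewrite -em; exact/asboolP.
by rewrite -lez_nat -em leNgt hm.
Qed.

Lemma TmaxP : has_exc N x ->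
  1 < N (x (Tmax N x)) /\ forall m, Tmax N x < m -> N (x m) <= 1.
Proof.
move=> /exc_natP hex.
apply: (xgetPex 0 (P := [set j | 1 < N (x j) /\ forall m, j < m -> N (x m) <= 1])).
have ub n : `[< 1 < N (x n%:Z) >] -> (n <= r)%N.
  by move=> /asboolP /exc_range /andP [_]; rewrite lez_nat.
case: (ex_maxnP hex ub) => b /asboolP hb bmax; exists b%:Z; split => // m hm.
rewrite leNgt; apply/negP => hm1; have em := exc_nat hm1.
have : (`|m| <= b)%N by apply: bmax; rewrite -em; exact/asboolP.
by rewrite -lez_nat -em leNgt hm.
Qed.

Lemma clen_exc : has_exc N x -> exists a b : nat,
  [/\ (a <= b)%N, 1 < N (x a%:Z), 1 < N (x b%:Z) & clen N x = (b - a).+1].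
Proof.
move=> he; have [ha amin] := TminP he; have [hb _] := TmaxP he.
have [a ea] : exists a : nat, Tmin N x = a%:Z by exists `|Tmin N x|%N; exact: exc_nat.
have [b eb] : exists b : nat, Tmax N x = b%:Z by exists `|Tmax N x|%N; exact: exc_nat.
rewrite ea in ha amin; rewrite eb in hb.
have ab : (a <= b)%N by rewrite leqNgt -ltz_nat; apply/negP => /amin; rewrite leNgt hb.
by exists a, b; rewrite /clen asboolT // ea eb distnEl.
Qed.

End ClusterEnds.

Section ScaledBlock.
Variables (R : realType) (d : nat) (N : 'rV[R]_d -> R).
Hypothesis hN : is_norm N.
Variables (x : int -> 'rV[R]_d) (u : R) (r : nat).
Hypothesis u_gt0 : 0 < u.

Local Notation sb := (scaled_block x u r).

Lemma normN_scaled_block m :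
  N (sb m) = if (1 <= m) && (m <= r%:Z) then N (x m) / u else 0.
Proof.
rewrite /scaled_block; case: ifP => _; last exact: normN0.
by case: hN => _ hZ _; rewrite hZ ger0_norm ?invr_ge0 ?ltW // mulrC.
Qed.

Lemma scaled_block_exc m :
  1 < N (sb m) <-> [/\ 1 <= m, m <= r%:Z & u < N (x m)].
Proof.
rewrite normN_scaled_block; case: ifP => [/andP [m1 mr]|/negbT].
  by rewrite ltr_pdivlMr // mul1r; split => [|[]].
by rewrite ltr10 negb_and => hm; split => // -[m1 mr _]; rewrite m1 mr in hm.
Qed.

Lemma ell0_scaled_block : ell0 N sb.
Proof.
split; apply: cvg_near_cst; exists r.+1 => // n /= hn.
  by rewrite normN_scaled_block ifF // lez_nat leqNgt hn andbF.
rewrite normN_scaled_block ifF //; apply/negbTE; rewrite negb_and -ltNge.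
by apply/orP; left; apply: le_lt_trans ltr01; rewrite oppr_le0.
Qed.

Lemma clen_scaled_block : has_exc N sb -> exists a b : nat,
  [/\ (1 <= a <= b)%N, (b <= r)%N, u < N (x a%:Z), u < N (x b%:Z)
    & clen N sb = (b - a).+1].
Proof.
have range j : 1 < N (sb j) -> 0 <= j <= r%:Z.
  by move=> /scaled_block_exc [j1 jr _]; rewrite jr (le_trans _ j1).
move=> /(clen_exc range) [a [b [ab /scaled_block_exc [a1 _ ua]]]].
move=> /scaled_block_exc [_ br ub] ->; exists a, b; split => //.
by rewrite ab andbT -lez_nat.
Qed.

End ScaledBlock.

Lemma lipschitz_continuous (R : realType) (V : normedModType R) (f : V -> R) (k : R) :
  (forall x y, `|f x - f y| <= k * `|x - y|) -> continuous f.
Proof.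
move=> fk x; apply/cvgrPdist_le => e e0 /=.
have k1 : 0 < `|k| + 1 by rewrite ltr_wpDl.
near=> y; apply: le_trans (fk x y) _.
apply: le_trans (_ : _ <= (`|k| + 1) * `|x - y|) _.
  by rewrite ler_wpM2r // (le_trans (ler_norm k)) ?lerDl.
rewrite -ler_pdivlMl // mulrC; near: y.
exact: (@cvgr_dist_le _ _ _ (nbhs x) _ id x (@cvg_id _ (nbhs x)) _ (divr_gt0 e0 k1)).
Unshelve. all: by end_near.
Qed.

Section Ramp.
Variable R : realType.

Definition ramp (t : R) : R :=
  if t <= 2^-1 then 0 else if 1 <= t then 1 else 2 * t - 1.

Lemma ramp_lipschitz s t : `|ramp s - ramp t| <= 2 * `|s - t|.
Proof.
wlog st : s t / t <= s => [W|].
  by have [/W //|/ltW /W] := leP t s; rewrite distrC (distrC s).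
rewrite (ger0_norm (_ : 0 <= s - t)) ?subr_ge0 // /ramp.
by repeat case: ifP => ?; apply/ler_normlP; split; lra.
Qed.

Lemma ramp_ge0 t : 0 <= ramp t.
Proof. by rewrite /ramp; repeat case: ifP => ?; lra. Qed.

Lemma ramp_le1 t : ramp t <= 1.
Proof. by rewrite /ramp; repeat case: ifP => ?; lra. Qed.

Lemma ramp1 t : 1 <= t -> ramp t = 1.
Proof. by rewrite /ramp => ?; repeat case: ifP => ?; lra. Qed.

Lemma ramp0 t : t <= 2^-1 -> ramp t = 0.
Proof. by rewrite /ramp => ->. Qed.

Lemma ramp_continuous : continuous ramp.
Proof. exact: (lipschitz_continuous ramp_lipschitz). Qed.

End Ramp.

Section EndsRamp.
Variables (R : realType) (d : nat) (N : 'rV[R]_d -> R) (u : R).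
Hypotheses (hN : is_norm N) (u_gt0 : 0 < u).

Definition ends_ramp k (z : 'M[R]_(k.+1, d)) : R :=
  ramp (N (row ord0 z) / u) * ramp (N (row ord_max z) / u).

Lemma ramp_normN_row_continuous m (l : 'I_m) :
  continuous (fun z : 'M[R]_(m, d) => ramp (N (row l z) / u)).
Proof.
apply: (@lipschitz_continuous _ _ _ (2 * (basis_norm N / u))) => z z'.
apply: le_trans (ramp_lipschitz _ _) _; rewrite -mulrA ler_wpM2l //.
rewrite -mulrBl normrM [`|u^-1|]gtr0_norm ?invr_gt0 // mulrAC ler_pM2r ?invr_gt0 //.
exact: normN_row_lipschitz.
Qed.

Lemma ends_ramp_continuous k : continuous (@ends_ramp k).
Proof.
have -> : @ends_ramp k = (fun z => ramp (N (row ord0 z) / u))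
                          \* (fun z => ramp (N (row ord_max z) / u)) by [].
by move=> z; apply: continuousM; apply: ramp_normN_row_continuous.
Qed.

Lemma ends_ramp_bounded k : exists M : R, forall z, `|@ends_ramp k z| <= M.
Proof.
exists 1 => z; rewrite /ends_ramp normrM -[1]mulr1.
by apply: ler_pM; rewrite ?ger0_norm ?ramp_ge0 ?ramp_le1.
Qed.

End EndsRamp.

(* No measurability is required: the integral of a nonnegative function is a
   supremum over the simple functions below it. *)
Lemma ge0_le_integralT (dT : measure_display) (T : measurableType dT) (R : realType)
    (mu : {measure set T -> \bar R}) (f g : T -> \bar R) :
  (forall w, (0 <= f w)%E) -> (forall w, (f w <= g w)%E) ->
  (\int[mu]_w f w <= \int[mu]_w g w)%E.
Proof.
move=> f0 fg; have g0 w : (0 <= g w)%E by apply: le_trans (f0 w) (fg w).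
rewrite (ge0_integralTE mu f0) (ge0_integralTE mu g0).
apply: ereal_sup_le => _ [h hf <-]; exists h => //= w.
exact: le_trans (hf w) (fg w).
Qed.

Lemma sum_shift_le (R : numDomainType) (F : nat -> R) (r l : nat) :
  (forall k, 0 <= F k) ->
  \sum_(1 <= i < r.+1) \sum_(i + l <= j < r.+1) F (j - i)%N
    <= r%:R * \sum_(l <= k < r.+1) F k.
Proof.
move=> F0; have -> : r%:R * \sum_(l <= k < r.+1) F k =
    \sum_(1 <= i < r.+1) \sum_(l <= k < r.+1) F k.
  by rewrite big_const_nat subn1 /= iter_addr addr0 mulr_natl.
apply: ler_sum => i _; rewrite addnC big_addn.
under eq_bigr do rewrite addnK.
rewrite (big_nat_widen _ _ _ _ _ (leq_subr i r.+1)) big_mkcond /=.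
by apply: ler_sum => k _; case: ifP.
Qed.

Section LimsupDomination.
Variable R : realType.
Local Open Scope ereal_scope.

Lemma ge0_cvge0 {T} {F : set_system T} {FF : Filter F} (f : T -> \bar R) :
  (forall x, 0 <= f x) -> (forall e : R, (0 < e)%R -> \forall x \near F, f x <= e%:E) ->
  f @ F --> 0.
Proof.
move=> f0 fe; have fin x : f x <= 1%:E -> f x \is a fin_num.
  by move=> /le_lt_trans/(_ (ltry _)); rewrite ge0_fin_numE.
apply/fine_cvgP; split; first exact: filterS (fe _ ltr01).
apply/cvgrPdist_le => e e0; apply: filterS (fe _ e0) => x hx.
rewrite sub0r normrN ger0_norm ?fine_ge0 // -lee_fin fineK //.
by rewrite ge0_fin_numE // (le_lt_trans hx) ?ltry.
Qed.

Lemma limn_esupE (v : (\bar R)^nat) : limn_esup v = ereal_inf (range (esups v)).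
Proof. by rewrite limn_esup_lim; apply: cvg_lim => //; exact: cvg_esups_inf. Qed.

Lemma limn_esup_le_esups (v : (\bar R)^nat) m : limn_esup v <= esups v m.
Proof.
by rewrite limn_esupE; apply: ereal_inf_lbound; exists m.
Qed.

Lemma limn_esup_lt (v : (\bar R)^nat) e : limn_esup v < e -> exists m, esups v m < e.
Proof.
by rewrite limn_esupE => /ereal_inf_lt [_ [m _ <-] h]; exists m.
Qed.

Lemma esups_le_scale (v v' : (\bar R)^nat) (K : R) : (0 <= K)%R ->
  (forall n, v n <= K%:E * v' n) -> forall m, esups v m <= K%:E * esups v' m.
Proof.
move=> K0 vv' m; apply: ge_ereal_sup => _ [n /= mn <-].
apply: le_trans (vv' n) _; rewrite lee_wpmul2l ?lee_fin //.
by apply: ereal_sup_ubound; exists n.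
Qed.

Lemma limn_esup_dominated_cvg0 (f : R -> (\bar R)^nat) (c : nat -> (\bar R)^nat)
    (K : R) (b : nat -> R) :
  (0 < K)%R -> (forall L n, 0 <= f L n) ->
  (\forall l \near \oo, forall L, (b l <= L)%R -> forall n, f L n <= K%:E * c l n) ->
  (fun l => limn_esup (c l)) @ \oo --> 0 ->
  (fun L => limn_esup (f L)) @ +oo%R --> 0.
Proof.
move=> K0 f0 fc c0; apply: ge0_cvge0 => [L|e e0].
  exact: limf_esup_ge0 (@filter_not_empty _ _ _) (f0 L).
have eK : 0 < (e / K)%:E by rewrite lte_fin divr_gt0.
have [l [fcl /limn_esup_lt [m hm]]] := filter_ex (filterI fc (c0 _ (open_ereal_lt' eK))).
near=> L; apply: le_trans (limn_esup_le_esups _ m) _.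
have bL : (b l <= L)%R by near: L; exact: nbhs_pinfty_ge (num_real _).
apply: le_trans (esups_le_scale (ltW K0) (fcl L bL) m) _.
apply: le_trans (_ : _ <= K%:E * (e / K)%:E) _.
  by rewrite lee_wpmul2l ?lee_fin ?ltW.
by rewrite -EFinM mulrC divfK ?gt_eqF.
Unshelve. all: by end_near.
Qed.

End LimsupDomination.

Lemma powR_natS_le (R : realType) (g : R) (k : nat) : 0 <= g -> (1 <= k)%N ->
  k.+1%:R `^ g <= 2 `^ g * k%:R `^ g.
Proof.
move=> g0 k1; rewrite -powRM ?ler0n // ge0_ler_powR ?nnegrE ?mulr_ge0 ?ler0n //.
by rewrite -natrM ler_nat; lia.
Qed.

Section ExceedanceIntegrals.
Variables (R : realType) (d : nat) (N : 'rV[R]_d -> R).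
Variables (dT : measure_display) (T : measurableType dT) (P : probability T R).
Variables (X : int -> T -> 'rV[R]_d) (u : R).
Hypotheses (hN : is_norm N) (mX : coord_measurable X) (stat : stationary P X).
Hypothesis u_gt0 : 0 < u.

Definition ramp_exc (m : int) (w : T) : R := ramp (N (X m w) / u).

Lemma measurable_ramp_exc m : measurable_fun setT (ramp_exc m).
Proof.
apply: measurableT_comp; first exact: continuous_measurable_fun (@ramp_continuous R).
by apply: measurable_funM; [exact: measurable_normN | exact: measurable_cst].
Qed.

Lemma ramp_exc_shift (i j : nat) : (i <= j)%N ->
  (\int[P]_w (ramp_exc i w * ramp_exc j w)%:E =
   \int[P]_w (ramp_exc 0 w * ramp_exc (j - i)%N w)%:E)%E.
Proof.
move=> ij; have block_row x k (l : 'I_k.+1) m : row l (block x m k) = x (m + l%:Z).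
  by apply/rowP => c; rewrite !mxE.
have := stat i%:Z (- i%:Z) (@ends_ramp_continuous _ _ _ _ hN u_gt0 (j - i)%N)
  (ends_ramp_bounded N u (j - i)%N).
rewrite subrr; congr (_ = _); apply: eq_integral => w _; congr EFin.
  by rewrite /ends_ramp !block_row /= addr0 -PoszD subnKC.
by rewrite /ends_ramp !block_row /= !add0r.
Qed.

Definition joint_exc (k : nat) : set T :=
  [set w | u * 2^-1 < N (X 0 w) /\ u * 2^-1 < N (X k%:Z w)].

Lemma measurable_joint_exc k : measurable (joint_exc k).
Proof.
have exc_meas m : measurable [set w | u * 2^-1 < N (X m w)].
  have := measurable_normN hN (mX m) measurableT (measurable_itv `]u * 2^-1, +oo[).
  rewrite setTI; congr measurable.
  by apply/seteqP; split => w /=; rewrite in_itv /= andbT.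
exact: (measurableI _ _ (exc_meas 0) (exc_meas k%:Z)).
Qed.

Definition pjoint k := fine (P (joint_exc k)).

Lemma joint_excE k : P (joint_exc k) = (pjoint k)%:E.
Proof.
rewrite /pjoint fineK // ge0_fin_numE ?measure_ge0 //.
exact: le_lt_trans (probability_le1 P (measurable_joint_exc k)) (ltry _).
Qed.

Lemma pjoint_ge0 k : 0 <= pjoint k.
Proof. by rewrite fine_ge0 ?measure_ge0. Qed.

Lemma ramp_exc_integral_le (i j : nat) : (i <= j)%N ->
  (\int[P]_w (ramp_exc i w * ramp_exc j w)%:E <= (pjoint (j - i))%:E)%E.
Proof.
move=> ij; rewrite ramp_exc_shift // -joint_excE.
rewrite -[joint_exc _]setIT -integral_indic //; last exact: measurable_joint_exc.
apply: ge0_le_integralT => w; first by rewrite lee_fin mulr_ge0 ?ramp_ge0.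
rewrite lee_fin indicE; have [hw|hw] := boolP (w \in joint_exc (j - i)).
  by rewrite -[1]mulr1 ler_pM ?ramp_ge0 ?ramp_le1.
move: hw; rewrite notin_setE /joint_exc /= => /not_andP [] /negP; rewrite -leNgt => h.
  by rewrite /ramp_exc ramp0 ?mul0r // ler_pdivrMr //; lra.
by rewrite /ramp_exc [X in _ * X]ramp0 ?mulr0 // ler_pdivrMr //; lra.
Qed.

Variables (H : (int -> 'rV[R]_d) -> R) (gamma C : R).
Hypotheses (gamma_ge0 : 0 <= gamma) (C_gt0 : 0 < C).
Hypothesis H_ge0 : forall x, ell0 N x -> 0 <= H x.
Hypothesis H_le : forall x, ell0 N x -> H x <= C * (clen N x)%:R `^ gamma.

Definition pair_weight (i j : nat) (w : T) : R :=
  C * (j - i).+1%:R `^ gamma * (ramp_exc i w * ramp_exc j w).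

Lemma pair_weight_ge0 i j w : 0 <= pair_weight i j w.
Proof. by rewrite !mulr_ge0 ?ramp_ge0 ?powR_ge0 ?(ltW C_gt0). Qed.

Lemma measurable_pair_weight i j : measurable_fun setT (pair_weight i j).
Proof.
apply: measurable_funM; first exact: measurable_cst.
by apply: measurable_funM; exact: measurable_ramp_exc.
Qed.

Definition pair_bound (l r : nat) (w : T) : R :=
  \sum_(1 <= i < r.+1) \sum_(i + l <= j < r.+1) pair_weight i j w.

Lemma H_tail_le_pair_bound (r l : nat) (L : R) w :
  C * l%:R `^ gamma <= L ->
  `|H (scaled_block (X ^~ w) u r)| * ((L < `|H (scaled_block (X ^~ w) u r)|)%R)%:R
    <= pair_bound l r w.
Proof.
move=> hL; set sb := scaled_block _ _ _; set h := `|H sb|.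
have sb0 : ell0 N sb := ell0_scaled_block hN (X ^~ w) r u_gt0.
have pb0 : 0 <= pair_bound l r w.
  by do 2 (apply: sumr_ge0 => ? _); exact: pair_weight_ge0.
have [Lh|] := ltP L h; last by rewrite mulr0.
rewrite mulr1 /h ger0_norm ?H_ge0 // in Lh *.
have lc : (l < clen N sb)%N.
  rewrite ltnNge; apply/negP => cl; suff : C * (clen N sb)%:R `^ gamma <= L.
    by have := H_le sb0; lra.
  apply: le_trans hL; rewrite ler_pM2l // ge0_ler_powR ?nnegrE ?ler0n //.
  by rewrite ler_nat.
have he : has_exc N sb by move: lc; rewrite /clen; case: asboolP.
have [a [b [/andP [a1 ab] br ua ub cl]]] := clen_scaled_block hN u_gt0 he.
rewrite cl in lc; apply: le_trans (H_le sb0) _; rewrite cl.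
rewrite /pair_bound (bigD1_seq a) ?mem_index_iota ?iota_uniq ?a1 ?ltnS //=; last first.
  exact: leq_trans ab br.
rewrite -[leLHS]addr0 lerD ?sumr_ge0 // => [|i _]; last first.
  by apply: sumr_ge0 => j _; exact: pair_weight_ge0.
rewrite (bigD1_seq b) ?mem_index_iota ?iota_uniq ?ltnS ?br //=; last by lia.
rewrite -[leLHS]addr0 lerD ?sumr_ge0 // => [|j _]; last exact: pair_weight_ge0.
by rewrite /pair_weight /ramp_exc !ramp1 ?mulr1 // ler_pdivlMr // mul1r ltW.
Qed.

Lemma integral_pair_row_le (l r i : nat) :
  (\int[P]_w (\sum_(i + l <= j < r.+1) pair_weight i j w)%:E <=
   (\sum_(i + l <= j < r.+1) C * (j - i).+1%:R `^ gamma * pjoint (j - i))%:E)%E.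
Proof.
under eq_integral do rewrite -sumEFin.
rewrite ge0_integral_sum //; last 2 first.
- by move=> j; apply/measurable_EFinP; exact: measurable_pair_weight.
- by move=> j w _; rewrite lee_fin pair_weight_ge0.
rewrite -sumEFin big_seq_cond [in leRHS]big_seq_cond; apply: lee_sum => j.
rewrite mem_index_iota => /andP [/andP [ilj _] _].
under eq_integral do rewrite EFinM.
rewrite ge0_integralZl_EFin ?EFinM //; last 3 first.
- by move=> w _; rewrite lee_fin mulr_ge0 ?ramp_ge0.
- by apply/measurable_EFinP; apply: measurable_funM; exact: measurable_ramp_exc.
- by rewrite mulr_ge0 ?powR_ge0 ?(ltW C_gt0).
rewrite lee_wpmul2l ?lee_fin ?mulr_ge0 ?powR_ge0 ?(ltW C_gt0) //.
by apply: ramp_exc_integral_le; lia.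
Qed.

Lemma integral_pair_bound_le (l r : nat) :
  (\int[P]_w (pair_bound l r w)%:E <=
   (r%:R * \sum_(l <= k < r.+1) C * k.+1%:R `^ gamma * pjoint k)%:E)%E.
Proof.
under eq_integral do rewrite /pair_bound -sumEFin.
rewrite ge0_integral_sum //; last 2 first.
- move=> i; apply/measurable_EFinP; apply: measurable_sum => j.
  exact: measurable_pair_weight.
- by move=> i w _; rewrite lee_fin; apply: sumr_ge0 => j _; exact: pair_weight_ge0.
apply: le_trans; first by apply: lee_sum => i _; exact: integral_pair_row_le.
rewrite sumEFin lee_fin.
apply: (sum_shift_le (F := fun k => C * k.+1%:R `^ gamma * pjoint k)) => k.
by rewrite !mulr_ge0 ?powR_ge0 ?pjoint_ge0 ?(ltW C_gt0).
Qed.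

Lemma H_tail_integral_le (r l : nat) (L : R) :
  (1 <= l)%N -> C * l%:R `^ gamma <= L ->
  (\int[P]_w (`|H (scaled_block (X ^~ w) u r)|
               * ((L < `|H (scaled_block (X ^~ w) u r)|)%R)%:R)%:E <=
   (C * 2 `^ gamma * (r%:R * \sum_(l <= k < r.+1) k%:R `^ gamma * pjoint k))%:E)%E.
Proof.
move=> l1 hL; apply: le_trans (le_trans _ (integral_pair_bound_le l r)) _.
  apply: ge0_le_integralT => w; rewrite lee_fin ?mulr_ge0 //.
  exact: H_tail_le_pair_bound.
rewrite lee_fin mulrCA ler_wpM2l // mulr_sumr big_nat_cond [leRHS]big_nat_cond.
apply: ler_sum => k /andP [/andP [lk _] _]; rewrite !mulrA ler_wpM2r ?pjoint_ge0 //.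
by rewrite -mulrA ler_wpM2l ?(ltW C_gt0) // powR_natS_le // (leq_trans l1).
Qed.

Lemma H_tail_ratio_le (r l : nat) (L wn : R) :
  (0 < r)%N -> 0 <= wn -> (1 <= l)%N -> C * l%:R `^ gamma <= L ->
  (\int[P]_w (`|H (scaled_block (X ^~ w) u r)|
               * ((L < `|H (scaled_block (X ^~ w) u r)|)%R)%:R)%:E
     * ((r%:R * wn)^-1)%:E <=
   (C * 2 `^ gamma)%:E * ((wn^-1)%:E *
     \sum_(l <= i < r.+1) ((i%:R `^ gamma)%:E * P (joint_exc i))))%E.
Proof.
move=> r0 wn0 l1 hL.
apply: le_trans (lee_wpmul2r _ (H_tail_integral_le r l1 hL)) _.
  by rewrite lee_fin invr_ge0 mulr_ge0.
rewrite [in leRHS](eq_bigr (fun i => (i%:R `^ gamma * pjoint i)%:E)); last first.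
  by move=> i _; rewrite joint_excE EFinM.
rewrite sumEFin -!EFinM lee_fin invfM; set S := \sum_(_ <= _ < _) _.
have -> : C * 2 `^ gamma * (r%:R * S) * (r%:R^-1 * wn^-1) =
    C * 2 `^ gamma * (wn^-1 * S) * (r%:R * r%:R^-1) by ring.
by rewrite mulfV ?pnatr_eq0 -?lt0n // mulr1.
Qed.

End ExceedanceIntegrals.

Unset Implicit Arguments.
Theorem lemma3p7 (R : realType) (d : nat) (N : 'rV[R]_d -> R)
    (dT : measure_display) (T : measurableType dT) (P : probability T R)
    (X : int -> T -> 'rV[R]_d)
    (dT' : measure_display) (T' : measurableType dT') (P' : probability T' R)
    (Y : int -> T' -> 'rV[R]_d)
    (u : nat -> R) (r : nat -> nat) (gamma : R)
    (H : (int -> 'rV[R]_d) -> R) :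
  is_norm N ->
  coord_measurable X -> coord_measurable Y ->
  stationary P X ->
  regvar_tail N P X P' Y ->
  (forall n, 0 < u n) -> (forall n, (0 < r n)%N) ->
  u @ \oo --> +oo ->
  r @ \oo --> \oo ->
  let w n := fine (P [set v | u n < N (X 0 v)]) in
  (fun n => n%:R * w n) @ \oo --> +oo ->
  (fun n => (r n)%:R / n%:R) @ \oo --> (0 : R) ->
  (fun n => (r n)%:R * w n) @ \oo --> (0 : R) ->
  0 <= gamma ->
  cond_S N P X gamma r u ->
  Hclass N P' Y gamma H ->
  (fun L : R => limn_esup (fun n : nat =>
      ((\int[P]_v ((`|H (scaled_block (X ^~ v) (u n) (r n))|
                    * ((L < `|H (scaled_block (X ^~ v) (u n) (r n))|)%R)%:R)%:E))
       * (((r n)%:R * w n)^-1)%:E)%E))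
    @ +oo --> 0%E.
Proof.
move=> hN mX _ stat _ u_gt0 r_gt0 _ _ w _ _ _ gamma_ge0 condS.
case=> H_ge0 _ _ _ [C C_gt0 H_le].
have w_ge0 n : 0 <= w n by rewrite fine_ge0 ?measure_ge0.
have half_gt0 : (0 : R) < 2^-1 by rewrite invr_gt0.
apply: (limn_esup_dominated_cvg0 (K := C * 2 `^ gamma)
          (b := fun l => C * l%:R `^ gamma) _ _ _ (condS _ _ half_gt0 half_gt0)).
- by rewrite mulr_gt0 ?powR_gt0.
- move=> L n; rewrite mule_ge0 ?lee_fin ?invr_ge0 ?mulr_ge0 //.
  by apply: integral_ge0 => v _; rewrite lee_fin mulr_ge0.
- near=> l => L hL n.
  apply: H_tail_ratio_le => //.
  by near: l; exists 1%N.
Unshelve. all: by end_near.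
Qed.
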